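(* Let $\mathcal F,\mathcal G$ be weighted species with $f_n=[z^n]\mathcal F(z)>0$ and $g_n=[z^n]\mathcal G(z)>0$ for all large $n$. Suppose $\rho:=\rho_{\mathcal G}\in(0,\infty)$ is the radius of convergence of $\mathcal G(z)$, $g_n/g_{n+1}\to\rho$, $\frac1{g_n}\sum_{i+j=n}g_ig_j\to2\mathcal G(\rho)<\infty$, and $f_n/g_n\to\lambda$ for a constant $0<\lambda<\infty$. Let $\mathsf S_n$ be an $n$-sized $\mathcal F\mathcal G$-structure drawn with probability proportional to its weight. Then $$[z^n]\mathcal F(z)\mathcal G(z)\sim\mathcal F(\rho)g_n+\mathcal G(\rho)f_n,$$ and $d_{\mathrm{TV}}(\mathsf S_n,\hat{\mathsf S}_n)\to0$, where $\hat{\mathsf S}_n$ is constructed as follows. Set $p=\mathcal F(\rho)/(\mathcal F(\rho)+\lambda\mathcal G(\rho))$ and flip a coin showing heads with probability $p$. If heads: sample a Boltzmann $\mathcal F$-object $\mathsf F$ with parameter $\rho$; if $|\mathsf F|\le n$ and $g_{n-|\mathsf F|}>0$, let $\hat{\mathsf S}_n$ be the $\mathcal F\mathcal G$-structure with $\mathcal F$-component $\mathsf F$ (placed on a uniformly random $|\mathsf F|$-subset of $\{1,\dots,n\}$) and a $\mathcal G$-component on the remaining $n-|\mathsf F|$ labels drawn with probability proportional to its weight; otherwise set $\hat{\mathsf S}_n=\diamond$ (a placeholder). If tails: symmetrically sample a Boltzmann $\mathcal G$-object $\mathsf G$ with parameter $\rho$, and if $|\mathsf G|\le n$ and $f_{n-|\mathsf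 G|}>0$ complete it with a weight-proportionally drawn $\mathcal F$-component on the remaining $n-|\mathsf G|$ labels; otherwise $\hat{\mathsf S}_n=\diamond$.
   Context: A weighted species $\mathcal F$ assigns to each finite set $U$ a finite set $\mathcal F[U]$ of weighted structures, compatibly with relabelling; $[z^n]\mathcal F(z)$ is $1/n!$ times the total weight of $\mathcal F[\{1,\dots,n\}]$. An $\mathcal F\mathcal G$-structure on $U$ is a pair ($\mathcal F$-structure on $U_1$, $\mathcal G$-structure on $U_2$) with $U=U_1\sqcup U_2$ and product weight. For $\rho>0$ with $\mathcal F(\rho)<\infty$, the Boltzmann distribution with parameter $\rho$ selects $F\in\mathcal F[\{1,\dots,m\}]$ with probability $\omega(F)\rho^m/(m!\,\mathcal F(\rho))$. $d_{\mathrm{TV}}$ denotes total variation distance. *)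

From Stdlib Require Import Reals ClassicalEpsilon.
From HB Require Import structures.
From mathcomp Require Import all_boot.

Set Implicit Arguments.
Unset Strict Implicit.
Unset Printing Implicit Defensive.

Open Scope R_scope.

(* A weighted species, described through its structures on the canonical
   label sets [n] = {0,...,n-1}: there are [nstr n] structures on [n],
   indexed by 'I_(nstr n), with nonnegative weights [wt n i].
   F-structures on an arbitrary finite set U of labels (here always a subset
   of [n]) are identified with F-structures on [#|U|] by transport along the
   increasing bijection [#|U|] -> U; relabelling compatibility makes weights
   depend only on the transported structure. *)
Record wspecies := WSpecies {
  nstr : nat -> nat;
  wt : forall n : nat, 'I_(nstr n) -> R;
  wt_nonneg : forall (n : nat) (i : 'I_(nstr n)), 0 <= wt i }.

Definition totw (F : wspecies) (n : nat) : R :=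
  \big[Rplus/0]_(i < nstr F n) wt i.

Definition coef (F : wspecies) (n : nat) : R := totw F n / INR (n`!).

(* value of the power series sum a_n x^n (meaningful when it converges) *)
Definition series_val (a : nat -> R) (x : R) : R :=
  epsilon (inhabits 0) (fun l => infinite_sum (fun n => a n * x ^ n) l).

Definition is_radius (a : nat -> R) (rho : R) : Prop :=
  is_lub (fun r => 0 <= r /\ exists M, forall n, Rabs (a n * r ^ n) <= M) rho.

(* FG-structures on [n]: a set U1 of labels carrying the F-component
   (an F-structure on [#|U1|], transported onto U1) and the G-component on
   the complement (a G-structure on [n - #|U1|], transported). *)
Definition prodstr (F G : wspecies) (n : nat) :=
  {U : {set 'I_n} & ('I_(nstr F #|U|) * 'I_(nstr G (n - #|U|)))%type}.

Definition prodwt (F G : wspecies) (n : nat) (s : prodstr F G n) : R :=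
  wt (tagged s).1 * wt (tagged s).2.

Definition prod_totw (F G : wspecies) (n : nat) : R :=
  \big[Rplus/0]_(s : prodstr F G n) prodwt s.

Definition prod_coef (F G : wspecies) (n : nat) : R :=
  prod_totw F G n / INR (n`!).

(* Law of S_n (n-sized FG-structure drawn proportionally to weight), on
   option (prodstr F G n), where None is the placeholder diamond. *)
Definition law_S (F G : wspecies) (n : nat) (x : option (prodstr F G n)) : R :=
  match x with
  | Some s => prodwt s / prod_totw F G n
  | None => 0
  end.

(* Probability that the "heads" branch (Boltzmann F-object with parameter rho,
   placed on a uniform random subset, completed by a weight-proportional
   G-component on the remaining labels) outputs s. *)
Definition heads_prob (F G : wspecies) (rho : R) (n : nat) (s : prodstr F G n) : R :=
  let k := #|tag s| in
  if Rlt_dec 0 (coef G (n - k)) then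
    (wt (tagged s).1 * rho ^ k / (INR (k`!) * series_val (coef F) rho))
    * / INR 'C(n, k)
    * (wt (tagged s).2 / totw G (n - k))
  else 0.

(* Symmetric "tails" branch: Boltzmann G-object of size m = n - k placed on a
   uniform random m-subset (the complement of U1), completed by a
   weight-proportional F-component on the remaining k labels U1. *)
Definition tails_prob (F G : wspecies) (rho : R) (n : nat) (s : prodstr F G n) : R :=
  let k := #|tag s| in
  let m := (n - k)%nat in
  if Rlt_dec 0 (coef F k) then
    (wt (tagged s).2 * rho ^ m / (INR (m`!) * series_val (coef G) rho))
    * / INR 'C(n, m)
    * (wt (tagged s).1 / totw F k)
  else 0.

Definition coin_p (F G : wspecies) (rho lambda : R) : R :=
  series_val (coef F) rho
  / (series_val (coef F) rho + lambda * series_val (coef G) rho).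

Definition law_hatS_some (F G : wspecies) (rho lambda : R) (n : nat)
  (s : prodstr F G n) : R :=
  coin_p F G rho lambda * heads_prob rho s
  + (1 - coin_p F G rho lambda) * tails_prob rho s.

Definition law_hatS (F G : wspecies) (rho lambda : R) (n : nat)
  (x : option (prodstr F G n)) : R :=
  match x with
  | Some s => law_hatS_some rho lambda s
  | None => 1 - \big[Rplus/0]_(s : prodstr F G n) law_hatS_some rho lambda s
  end.

Definition dTV (T : finType) (P Q : T -> R) : R :=
  / 2 * \big[Rplus/0]_(x : T) Rabs (P x - Q x).

From Stdlib Require Import Reals Lra Lia ClassicalEpsilon.
From HB Require Import structures.
From mathcomp Require Import all_boot zify.
Open Scope R_scope.

(* Put a_k = g_k rho^k, b_k = f_k rho^k, A = G(rho), B = F(rho).  The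
   hypotheses make (a, b) a "subexponential pair" (record [subexp_pair]):
   a, b are summable, a_n / a_(n+1) -> 1, (a*a)_n / a_n -> 2A and
   b_n / a_n -> lambda.
   - Section LocalLimit: for such a pair, (b*a)_n / a_n -> B + lambda A, and
     the law k |-> b_k a_(n-k) / (b*a)_n converges in l1 to the mixture
     k |-> (b_k + lambda a_(n-k)) / (B + lambda A).  Both proofs cut {0..n}
     into a head {0..M}, a tail {n-M..n} (handled by a_(n-j) / a_n -> 1) and
     a middle block, controlled by (a*a)_n / a_n - 2(a_0 + .. + a_M).
   - Section Blocks: an FG-structure is a label set U with an F- and a
     G-structure, so on the block |U| = k both S_n and hat S_n are
     proportional to the weight; their block masses are exactly the size law
     and the mixture above, whence dTV(S_n, hat S_n) <= their l1 distance.
   - The theorem follows: rho^n [z^n] F(z)G(z) = (b*a)_n gives the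
     coefficient asymptotics, and the dTV bound gives the coupling. *)

(* Real addition and multiplication as big-operator laws, so that the bigop
   library (splitting, distributivity, reindexing) applies to real sums. *)
Lemma Rplus_assoc_law : associative Rplus. Proof. by move=> x y z; ring. Qed.
HB.instance Definition _ :=
  Monoid.isComLaw.Build R 0 Rplus Rplus_assoc_law Rplus_comm Rplus_0_l.
HB.instance Definition _ := Monoid.isMulLaw.Build R 0 Rmult Rmult_0_l Rmult_0_r.
HB.instance Definition _ :=
  Monoid.isAddLaw.Build R Rmult Rplus Rmult_plus_distr_r Rmult_plus_distr_l.

Definition sumr (m p : nat) (f : nat -> R) : R := \big[Rplus/0]_(m <= k < p) f k.

Lemma sumr_f_R0 f n : sum_f_R0 f n = sumr 0 n.+1 f.
Proof.
elim: n => [|n IH]; first by rewrite /sumr big_nat1.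
by rewrite /= IH /sumr [in RHS]big_nat_recr.
Qed.

Lemma sumr_ext {m p f} g :
  (forall k, (m <= k < p)%N -> f k = g k) -> sumr m p f = sumr m p g.
Proof. by move=> H; apply: eq_big_nat. Qed.

Lemma sumr_scal c m p f : c * sumr m p f = sumr m p (fun k => c * f k).
Proof. by rewrite /sumr big_distrr. Qed.

Lemma sumr_div m p f c : sumr m p f / c = sumr m p (fun k => f k / c).
Proof. rewrite /Rdiv Rmult_comm sumr_scal; apply: sumr_ext => k _; ring. Qed.

Lemma sumr_plus m p f g : sumr m p (fun k => f k + g k) = sumr m p f + sumr m p g.
Proof. by rewrite /sumr big_split. Qed.

Lemma sumr_minus m p f g : sumr m p (fun k => f k - g k) = sumr m p f - sumr m p g.
Proof. by rewrite /sumr; elim/big_rec3: _ => [|i x y z _ ->]; ring. Qed.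

Lemma sumr_le m p f g :
  (forall k, (m <= k < p)%N -> f k <= g k) -> sumr m p f <= sumr m p g.
Proof.
move=> H; rewrite /sumr big_nat_cond [X in _ <= X]big_nat_cond.
apply: (big_ind2 (fun x y => x <= y)) => [|x1 x2 y1 y2|i /andP [Hi _]]; try lra.
exact: H.
Qed.

Lemma sumr_nonneg m p f : (forall k, (m <= k < p)%N -> 0 <= f k) -> 0 <= sumr m p f.
Proof.
move=> H; have -> : 0 = sumr m p (fun _ => 0) by rewrite /sumr big1.
exact: sumr_le.
Qed.

Lemma sumr_abs m p f : Rabs (sumr m p f) <= sumr m p (fun k => Rabs (f k)).
Proof.
rewrite /sumr; elim/big_rec2: _ => [|i y1 y2 _ H]; first by rewrite Rabs_R0; lra.
by apply: Rle_trans (Rabs_triang _ _) _; lra.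
Qed.

Lemma sumr_nil m f : sumr m m f = 0.
Proof. by rewrite /sumr big_geq. Qed.

Lemma sumr_split m n p f :
  (m <= n)%N -> (n <= p)%N -> sumr m p f = sumr m n f + sumr n p f.
Proof. by move=> H1 H2; rewrite /sumr (@big_cat_nat _ _ _ n). Qed.

Lemma sumr_recr m p f : (m <= p)%N -> sumr m p.+1 f = sumr m p f + f p.
Proof. by move=> H; rewrite /sumr big_nat_recr. Qed.

Lemma sumr_recl m p f : (m < p)%N -> sumr m p f = f m + sumr m.+1 p f.
Proof. by move=> H; rewrite /sumr big_ltn. Qed.

Lemma sumr_ge_term h n k : (forall j, 0 <= h j) -> (k <= n)%N -> h k <= sumr 0 n.+1 h.
Proof.
move=> H Hk; rewrite (sumr_split 0 k n.+1) 1?(sumr_recl k); try lia.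
have := @sumr_nonneg 0 k h (fun j _ => H j).
have := @sumr_nonneg k.+1 n.+1 h (fun j _ => H j); lra.
Qed.

Lemma sumr_rev n M h : (M <= n)%N ->
  sumr (n - M) n.+1 h = sumr 0 M.+1 (fun j => h (n - j)%N).
Proof.
elim: M => [|M IH] HM; first by rewrite /sumr subn0 !big_nat1 subn0.
rewrite (sumr_recl (n - M.+1)) 1?(sumr_recr 0 M.+1); try lia.
have -> : (n - M.+1).+1 = (n - M)%N by lia.
rewrite IH; [lra | lia].
Qed.

Lemma sumr_rev_full n h : sumr 0 n.+1 h = sumr 0 n.+1 (fun j => h (n - j)%N).
Proof. by rewrite -sumr_rev // subnn. Qed.

Lemma sumr_three n M h : (M.*2 < n)%N ->
  sumr 0 n.+1 h = sumr 0 M.+1 h + sumr M.+1 (n - M) h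
                  + sumr 0 M.+1 (fun j => h (n - j)%N).
Proof.
move=> H; rewrite (sumr_split 0 M.+1) 1?(sumr_split M.+1 (n - M)); try lia.
by rewrite sumr_rev; [lra | lia].
Qed.

Lemma cv_ev (u v : nat -> R) l N :
  (forall n, (N <= n)%N -> u n = v n) -> Un_cv u l -> Un_cv v l.
Proof.
move=> E H eps Heps; have [N1 HN1] := H eps Heps.
by exists (maxn N N1) => n Hn; rewrite -E; [apply: HN1 | ]; lia.
Qed.

Lemma cv_const c : Un_cv (fun _ => c) c.
Proof. by move=> eps He; exists 0%N => n _; rewrite /R_dist Rminus_diag Rabs_R0. Qed.

Lemma cv_scal c u l : Un_cv u l -> Un_cv (fun n => c * u n) (c * l).
Proof. by move=> H; apply: CV_mult => //; exact: cv_const. Qed.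

Lemma cv_div u v l1 l2 : Un_cv u l1 -> Un_cv v l2 -> l2 <> 0 ->
  Un_cv (fun n => u n / v n) (l1 / l2).
Proof.
move=> H1 H2 H3; apply: CV_mult => //.
have C : continuity_pt (/ id)%F l2.
  by apply: continuity_pt_inv => //; apply/derivable_continuous_pt/derivable_pt_id.
exact: (continuity_seq _ _ _ C H2).
Qed.

Lemma cv_shift u l j : Un_cv u l -> Un_cv (fun n => u (n - j)%N) l.
Proof.
move=> H eps He; have [N HN] := H eps He.
by exists (N + j)%N => n Hn; apply: HN; lia.
Qed.

Lemma cv_sumr (u : nat -> nat -> R) (l : nat -> R) M :
  (forall k, (k < M)%N -> Un_cv (fun n => u n k) (l k)) ->
  Un_cv (fun n => sumr 0 M (u n)) (sumr 0 M l).
Proof.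
elim: M => [|M IH] H.
  rewrite sumr_nil; apply: (Un_cv_ext (fun _ => 0)); last exact: cv_const.
  by move=> n; rewrite sumr_nil.
rewrite sumr_recr //; apply: (Un_cv_ext (fun n => sumr 0 M (u n) + u n M)).
  by move=> n; rewrite sumr_recr.
by apply: CV_plus; [apply: IH => k Hk; apply: H; lia | exact: H].
Qed.

Lemma cv_sumr0 (u : nat -> nat -> R) M :
  (forall k, (k < M)%N -> Un_cv (fun n => u n k) 0) ->
  Un_cv (fun n => sumr 0 M (u n)) 0.
Proof.
move=> H; have -> : 0 = sumr 0 M (fun _ => 0) by rewrite /sumr big1.
exact: cv_sumr.
Qed.

Lemma cv_abs0 u : Un_cv u 0 -> Un_cv (fun n => Rabs (u n)) 0.
Proof. by move=> H; rewrite -Rabs_R0; exact: cv_cvabs. Qed.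

Lemma squeeze (u : nat -> R) L :
  (forall eps, 0 < eps -> exists (lo hi : nat -> R) l1 l2 N,
     (forall n, (N <= n)%N -> lo n <= u n <= hi n) /\ Un_cv lo l1 /\ Un_cv hi l2
     /\ L - eps <= l1 /\ l2 <= L + eps) -> Un_cv u L.
Proof.
move=> H eps He; have He2 : 0 < eps / 2 by lra.
have [lo [hi [l1 [l2 [N [Hb [Hlo [Hhi [H1 H2]]]]]]]]] := H _ He2.
have [N1 HN1] := Hlo _ He2; have [N2 HN2] := Hhi _ He2.
exists (maxn N (maxn N1 N2)) => n Hn.
have := Hb n ltac:(lia); have := HN1 n ltac:(lia); have := HN2 n ltac:(lia).
rewrite /R_dist => A1 A2 A3; apply: Rabs_def1.
- by have := Rabs_def2 _ _ A1; lra.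
- by have := Rabs_def2 _ _ A2; lra.
Qed.

Lemma ratio_bound {x y : nat -> R} {lam : R} :
  (exists N, forall n, (N <= n)%N -> 0 < y n) -> Un_cv (fun n => x n / y n) lam ->
  exists N, forall k, (N <= k)%N -> x k <= (lam + 1) * y k.
Proof.
move=> [Ny HNy] Hxy; have [N1 HN1] := Hxy 1 Rlt_0_1.
exists (maxn Ny N1) => k Hk.
have P := HNy k ltac:(lia); have := HN1 k ltac:(lia); rewrite /R_dist => Q.
have Q' : x k / y k < lam + 1 by have := Rabs_def2 _ _ Q; lra.
have := Rmult_lt_compat_r (y k) _ _ P Q'; rewrite /Rdiv Rmult_assoc Rinv_l; lra.
Qed.

Lemma series_terms_lim0 {x : nat -> R} {X : R} :
  Un_cv (fun n => sumr 0 n.+1 x) X -> Un_cv x 0.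
Proof.
move=> x_sum.
apply: (@cv_ev (fun n => sumr 0 n.+1 x - sumr 0 (n - 1).+1 x) _ _ 1%N).
  move=> n Hn; have -> : (n - 1).+1 = n by lia.
  by rewrite (sumr_recr 0 n) //; lra.
have -> : 0 = X - X by lra.
by apply: CV_minus => //; exact: (@cv_shift (fun n => sumr 0 n.+1 x) _ 1%N).
Qed.

Section NonnegSeries.
Context {x : nat -> R} {X : R}.
Hypothesis x_nonneg : forall n, 0 <= x n.
Hypothesis x_sum : Un_cv (fun n => sumr 0 n.+1 x) X.

Lemma psum_le p : sumr 0 p x <= X.
Proof.
have G : Un_growing (fun n => sumr 0 n.+1 x).
  by move=> n; rewrite (sumr_recr 0 n.+1) //; have := x_nonneg n.+1; lra.
have Hg := growing_ineq _ _ G x_sum.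
case: p => [|p]; last exact: Hg.
by have := Hg 0%N; rewrite sumr_nil /sumr big_nat1; have := x_nonneg 0%N; lra.
Qed.

Lemma psum_mid m p : (m <= p)%N -> sumr m p x <= X - sumr 0 m x.
Proof. by move=> Hmp; have := psum_le p; rewrite (sumr_split 0 m p) //; lra. Qed.

Lemma series_pos N : 0 < x N -> 0 < X.
Proof.
move=> HN; have := psum_le N.+1; rewrite (sumr_recr 0 N) //.
by have := @sumr_nonneg 0 N x (fun k _ => x_nonneg k); lra.
Qed.

Lemma series_tail_small d : 0 < d ->
  exists M0, forall M, (M0 <= M)%N -> 0 <= X - sumr 0 M.+1 x < d.
Proof.
move=> Hd; have [M0 HM] := x_sum d Hd; exists M0 => M HM0.
have := psum_le M.+1; have := HM M ltac:(lia); rewrite /R_dist => Q.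
by have := Rabs_def2 _ _ Q; lra.
Qed.

End NonnegSeries.

Definition conv (x y : nat -> R) (n : nat) : R :=
  sumr 0 n.+1 (fun k => x k * y (n - k)%N).

Lemma conv_three x y n M : (M.*2 < n)%N ->
  conv x y n = sumr 0 M.+1 (fun k => x k * y (n - k)%N)
             + sumr M.+1 (n - M) (fun k => x k * y (n - k)%N)
             + sumr 0 M.+1 (fun j => x (n - j)%N * y j).
Proof.
move=> Hn; rewrite /conv (@sumr_three n M _ Hn); congr (_ + _).
by apply: sumr_ext => j Hj; have -> : (n - (n - j))%N = j by lia.
Qed.

(* The analytic content of the hypotheses, for a_k = g_k rho^k and
   b_k = f_k rho^k: a is summable and subexponential (a_n / a_(n+1) -> 1 and
   (a*a)_n / a_n -> 2A), b is summable and comparable to a (b_n / a_n -> lam). *)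
Record subexp_pair (a b : nat -> R) (A B lam : R) : Prop := SubexpPair {
  sp_a_nonneg : forall n, 0 <= a n;
  sp_b_nonneg : forall n, 0 <= b n;
  sp_a_pos : exists N, forall n, (N <= n)%N -> 0 < a n;
  sp_sum_a : Un_cv (fun n => sumr 0 n.+1 a) A;
  sp_sum_b : Un_cv (fun n => sumr 0 n.+1 b) B;
  sp_ratio : Un_cv (fun n => a n / a n.+1) 1;
  sp_conv : Un_cv (fun n => conv a a n / a n) (2 * A);
  sp_quot : Un_cv (fun n => b n / a n) lam;
  sp_lam : 0 < lam }.

(* The law of the index k in the convolution (b*a)_n: the size of the
   F-component of S_n. *)
Definition size_law (a b : nat -> R) (n k : nat) : R := b k * a (n - k)%N / conv b a n.

(* Its limit shape: either the b-part is small (law b/B) or the a-part is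
   small (law a/A), with weights B and lam A. *)
Definition mixture_law (a b : nat -> R) (A B lam : R) (n k : nat) : R :=
  (b k + lam * a (n - k)%N) / (B + lam * A).

Section LocalLimit.
Context {a b : nat -> R} {A B lam : R}.
Hypothesis Hab : subexp_pair a b A B lam.

Lemma sp_A_pos : 0 < A.
Proof. by case: Hab => Ha0 _ [N HN] HA *; exact: (series_pos Ha0 HA N (HN N (leqnn N))). Qed.

Lemma sp_B_nonneg : 0 <= B.
Proof. by case: Hab => _ Hb0 _ _ HB *; have := psum_le Hb0 HB 0; rewrite sumr_nil; lra. Qed.

Lemma ratio_shift j : Un_cv (fun n => a (n - j)%N / a n) 1.
Proof.
case: Hab => _ _ [Na HNa] _ _ Hrat *; elim: j => [|j IH].
  apply: (@cv_ev (fun _ => 1) _ _ Na); last exact: cv_const.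
  by move=> n Hn; rewrite subn0; have := HNa n Hn => P; field; lra.
apply: (@cv_ev (fun n => a (n - j.+1)%N / a (n - j.+1).+1 * (a (n - j)%N / a n))
               _ _ (Na + j.+1)%N).
  move=> n Hn; have -> : (n - j.+1).+1 = (n - j)%N by lia.
  have P1 := HNa (n - j)%N ltac:(lia); have P2 := HNa n ltac:(lia).
  by field; lra.
rewrite -(Rmult_1_l 1); apply: CV_mult => //.
exact: (@cv_shift (fun n => a n / a n.+1)).
Qed.

Lemma head_lim x M :
  Un_cv (fun n => sumr 0 M (fun k => x k * a (n - k)%N) / a n) (sumr 0 M x).
Proof.
apply: (Un_cv_ext (fun n => sumr 0 M (fun k => x k * (a (n - k)%N / a n)))).
  by move=> n; rewrite sumr_div; apply: sumr_ext => k _; rewrite /Rdiv Rmult_assoc.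
rewrite (sumr_ext (fun k => x k * 1)); last by move=> k _; ring.
by apply: cv_sumr => k _; apply: cv_scal; exact: ratio_shift.
Qed.

Lemma tail_lim x mu M : Un_cv (fun n => x n / a n) mu ->
  Un_cv (fun n => sumr 0 M.+1 (fun j => x (n - j)%N * a j) / a n)
        (mu * sumr 0 M.+1 a).
Proof.
case: Hab => _ _ [Na HNa] *.
apply: (@cv_ev (fun n => sumr 0 M.+1 (fun j =>
          x (n - j)%N / a (n - j)%N * (a (n - j)%N / a n) * a j)) _ _ (Na + M)%N).
  move=> n Hn; rewrite sumr_div; apply: sumr_ext => j Hj.
  have P1 := HNa (n - j)%N ltac:(lia); have P2 := HNa n ltac:(lia).
  by field; lra.
rewrite sumr_scal (sumr_ext (fun j => mu * 1 * a j)); last by move=> k _; ring.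
apply: cv_sumr => k _; apply: CV_mult; last exact: cv_const.
by apply: CV_mult; [exact: (@cv_shift (fun n => x n / a n)) | exact: ratio_shift].
Qed.

Lemma middle_lim M :
  Un_cv (fun n => sumr M.+1 (n - M) (fun k => a k * a (n - k)%N) / a n)
        (2 * A - 2 * sumr 0 M.+1 a).
Proof.
case: Hab => _ _ [Na HNa] _ _ _ Hconv *.
apply: (@cv_ev (fun n => conv a a n / a n
                 - sumr 0 M.+1 (fun k => a k * a (n - k)%N) / a n
                 - sumr 0 M.+1 (fun j => a (n - j)%N * a j) / a n) _ _ M.*2.+1).
  by move=> n Hn; rewrite (@conv_three _ _ n M Hn) /Rdiv; ring.
have -> : 2 * A - 2 * sumr 0 M.+1 a
          = 2 * A - sumr 0 M.+1 a - 1 * sumr 0 M.+1 a by ring.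
apply: CV_minus; first by apply: CV_minus; [exact: Hconv | exact: head_lim].
apply: tail_lim; apply: (@cv_ev (fun _ => 1) _ _ Na); last exact: cv_const.
by move=> n Hn; have := HNa n Hn => P; field; lra.
Qed.

Lemma middle_dominated M Nb n :
  (forall k, (Nb <= k)%N -> b k <= (lam + 1) * a k) -> (Nb <= M)%N ->
  0 <= sumr M.+1 (n - M) (fun k => b k * a (n - k)%N)
    <= (lam + 1) * sumr M.+1 (n - M) (fun k => a k * a (n - k)%N).
Proof.
case: Hab => Ha0 Hb0 _ _ _ _ _ _ _ Hdom HM; split.
  by apply: sumr_nonneg => k _; apply: Rmult_le_pos.
rewrite sumr_scal; apply: sumr_le => k Hk; rewrite -Rmult_assoc.
by apply: Rmult_le_compat_r => //; apply: Hdom; lia.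
Qed.

Lemma cut_point N d : 0 < d -> exists M, (N <= M)%N /\
  0 <= A - sumr 0 M.+1 a < d /\ 0 <= B - sumr 0 M.+1 b < d.
Proof.
case: Hab => Ha0 Hb0 _ HA HB _ _ _ _ Hd.
have [M1 HM1] := series_tail_small Ha0 HA d Hd.
have [M2 HM2] := series_tail_small Hb0 HB d Hd.
exists (maxn N (maxn M1 M2)); split; first lia.
by split; [apply: HM1 | apply: HM2]; lia.
Qed.


(* Head and
   tail give B and lam A up to the tails of the two series, while the middle
   block lies between 0 and (lam + 1) times the middle block of a*a. *)
Lemma conv_lim : Un_cv (fun n => conv b a n / a n) (B + lam * A).
Proof.
case: Hab => _ _ [Na HNa] _ _ _ _ Hba Hl.
have [Nb HNb] := ratio_bound (ex_intro _ Na HNa) Hba.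
apply: squeeze => eps He.
set d := eps / (2 * (lam + 1)).
have Hd : 0 < d by apply: Rdiv_lt_0_compat; lra.
have [M [HM [[TA1 TA2] [TB1 TB2]]]] := cut_point (maxn Na Nb) d Hd.
set SA := sumr 0 M.+1 a in TA1 TA2; set SB := sumr 0 M.+1 b in TB1 TB2.
set head := fun n => sumr 0 M.+1 (fun k => b k * a (n - k)%N) / a n.
set tail := fun n => sumr 0 M.+1 (fun j => b (n - j)%N * a j) / a n.
set mid := fun n => sumr M.+1 (n - M) (fun k => a k * a (n - k)%N) / a n.
have Hhead : Un_cv head SB by exact: head_lim.
have Htail : Un_cv tail (lam * SA) by exact: tail_lim.
exists (fun n => head n + tail n), (fun n => head n + tail n + (lam + 1) * mid n).
exists (SB + lam * SA), (SB + lam * SA + (lam + 1) * (2 * A - 2 * SA)).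
exists (maxn M.*2.+1 Na); split; [|split; [|split]].
- move=> n Hn; have P := HNa n ltac:(lia).
  have [Q1 Q2] := middle_dominated M Nb n HNb ltac:(lia).
  have Pinv : 0 <= / a n by left; apply: Rinv_0_lt_compat.
  have R1 := Rmult_le_compat_r _ _ _ Pinv Q1; have R2 := Rmult_le_compat_r _ _ _ Pinv Q2.
  rewrite (@conv_three _ _ n M ltac:(lia)) /head /tail /mid /Rdiv.
  rewrite !Rmult_plus_distr_r Rmult_assoc in R2 *; lra.
- exact: CV_plus.
- by apply: CV_plus; [exact: CV_plus | apply: cv_scal; exact: middle_lim].
- have E : d * (2 * (lam + 1)) = eps by rewrite /d; field; lra.
  have F1 : lam * (A - SA) <= lam * d by apply: Rmult_le_compat_l; lra.
  have F2 : 0 <= lam * (A - SA) by apply: Rmult_le_pos; lra.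
  have F3 : (lam + 1) * (2 * A - 2 * SA) <= (lam + 1) * (2 * d).
    by apply: Rmult_le_compat_l; lra.
  split; nra.
Qed.

Lemma mixture_norm_pos : 0 < B + lam * A.
Proof.
have := sp_A_pos; have := sp_B_nonneg; case: Hab => *; nra.
Qed.

Lemma conv_eventually_pos : exists N, forall n, (N <= n)%N -> 0 < a n /\ 0 < conv b a n.
Proof.
case: Hab => _ _ [Na HNa] *; have HD := mixture_norm_pos.
have [Nc HNc] := conv_lim (B + lam * A) ltac:(lra).
exists (maxn Na Nc) => n Hn; have P := HNa n ltac:(lia); split => //.
have := HNc n ltac:(lia); rewrite /R_dist => /Rabs_def2 [_ Q].
have Cpos : 0 < conv b a n / a n by lra.
by have := Rmult_lt_0_compat _ _ Cpos P; rewrite /Rdiv Rmult_assoc Rinv_l; lra.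
Qed.

Lemma size_law_head k :
  Un_cv (fun n => size_law a b n k - mixture_law a b A B lam n k) 0.
Proof.
have HD := mixture_norm_pos; have [Nc HNc] := conv_eventually_pos.
have Ha0 : Un_cv a 0 by case: Hab => _ _ _ HA *; exact: series_terms_lim0 HA.
apply: (@cv_ev (fun n => b k * ((a (n - k)%N / a n) / (conv b a n / a n))
                   - (b k + lam * a (n - k)%N) / (B + lam * A)) _ _ Nc).
  move=> n Hn; have [P Cp] := HNc n Hn.
  by rewrite /size_law /mixture_law; field; lra.
have -> : 0 = b k * (1 / (B + lam * A)) - (b k + lam * 0) * / (B + lam * A).
  by field; lra.
apply: CV_minus; first by apply: cv_scal; apply: cv_div; [exact: ratio_shift | exact: conv_lim | lra].
apply: CV_mult; last exact: cv_const.
by apply: CV_plus; [exact: cv_const | apply: cv_scal; exact: cv_shift].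
Qed.

Lemma size_law_tail j :
  Un_cv (fun n => size_law a b n (n - j) - mixture_law a b A B lam n (n - j)) 0.
Proof.
have HD := mixture_norm_pos; have [Nc HNc] := conv_eventually_pos.
have Hb0 : Un_cv b 0 by case: Hab => _ _ _ _ HB *; exact: series_terms_lim0 HB.
have Hba : Un_cv (fun n => b n / a n) lam by case: Hab.
apply: (@cv_ev (fun n => (b (n - j)%N / a (n - j)%N) * (a (n - j)%N / a n)
                      / (conv b a n / a n) * a j
                   - (b (n - j)%N + lam * a j) / (B + lam * A)) _ _ (Nc + j)%N).
  move=> n Hn; have [P Cp] := HNc n ltac:(lia); have [P' _] := HNc (n - j)%N ltac:(lia).
  by rewrite /size_law /mixture_law subKn; [field; lra | lia].
have -> : 0 = lam * 1 / (B + lam * A) * a j - (0 + lam * a j) * / (B + lam * A).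
  by field; lra.
apply: CV_minus; apply: CV_mult; try exact: cv_const.
- apply: cv_div; [|exact: conv_lim|lra].
  by apply: CV_mult; [exact: (@cv_shift (fun n => b n / a n)) | exact: ratio_shift].
- by apply: CV_plus; [exact: (@cv_shift b) | exact: cv_const].
Qed.

Lemma middle_rev_bound M n : (M.*2 < n)%N ->
  sumr M.+1 (n - M) (fun k => a (n - k)%N) <= A - sumr 0 M.+1 a.
Proof.
move=> Hn; case: Hab => Ha0 _ _ HA *.
have E := @sumr_three n M (fun k => a (n - k)%N) Hn.
rewrite -sumr_rev_full (sumr_ext (f := fun j => a (n - (n - j))%N) a) in E.
  have := psum_le Ha0 HA n.+1.
  have := @sumr_nonneg 0 M.+1 (fun k => a (n - k)%N) (fun k _ => Ha0 _); lra.
by move=> j Hj; congr a; lia.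
Qed.

Lemma size_law_middle M Nb n :
  (forall k, (Nb <= k)%N -> b k <= (lam + 1) * a k) -> (Nb <= M)%N ->
  (M.*2 < n)%N -> 0 < a n -> 0 < conv b a n ->
  sumr M.+1 (n - M) (fun k => Rabs (size_law a b n k - mixture_law a b A B lam n k))
  <= (lam + 1) * ((sumr M.+1 (n - M) (fun k => a k * a (n - k)%N) / a n)
                   / (conv b a n / a n))
     + ((B - sumr 0 M.+1 b) + lam * (A - sumr 0 M.+1 a)) / (B + lam * A).
Proof.
move=> HNb HM Hn P Cp; have HD := mixture_norm_pos.
case: Hab => Ha0 Hb0 _ _ HB _ _ _ Hl.
have HDinv : 0 <= / (B + lam * A) by left; apply: Rinv_0_lt_compat.
have HCinv : 0 <= / conv b a n by left; apply: Rinv_0_lt_compat.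
have Hsplit : sumr M.+1 (n - M) (fun k => Rabs (size_law a b n k - mixture_law a b A B lam n k))
    <= sumr M.+1 (n - M) (size_law a b n) + sumr M.+1 (n - M) (mixture_law a b A B lam n).
  rewrite -sumr_plus; apply: sumr_le => k _; apply: Rabs_le.
  have : 0 <= size_law a b n k by apply: Rmult_le_pos => //; apply: Rmult_le_pos.
  have : 0 <= mixture_law a b A B lam n k.
    by apply: Rmult_le_pos => //; have := Hb0 k; have := Ha0 (n - k)%N; nra.
  lra.
have Hsize : sumr M.+1 (n - M) (size_law a b n)
    <= (lam + 1) * ((sumr M.+1 (n - M) (fun k => a k * a (n - k)%N) / a n)
                    / (conv b a n / a n)).
  have [_ Q] := middle_dominated M Nb n HNb HM.
  have -> : sumr M.+1 (n - M) (fun k => a k * a (n - k)%N) / a n / (conv b a n / a n)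
          = sumr M.+1 (n - M) (fun k => a k * a (n - k)%N) / conv b a n by field; lra.
  rewrite /size_law -sumr_div /Rdiv -Rmult_assoc; exact: Rmult_le_compat_r HCinv Q.
have Hmix : sumr M.+1 (n - M) (mixture_law a b A B lam n)
    <= ((B - sumr 0 M.+1 b) + lam * (A - sumr 0 M.+1 a)) / (B + lam * A).
  rewrite /mixture_law -sumr_div sumr_plus -sumr_scal.
  apply: Rmult_le_compat_r => //.
  have := psum_mid Hb0 HB M.+1 (n - M)%N ltac:(lia).
  have := middle_rev_bound M n Hn.
  have := @sumr_nonneg M.+1 (n - M) (fun k => a (n - k)%N) (fun k _ => Ha0 _).
  nra.
lra.
Qed.

Lemma l1_budget eps SA SB : 0 < eps ->
  0 <= A - SA < eps * (B + lam * A) / (3 * (lam + 1)) ->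
  0 <= B - SB < eps * (B + lam * A) / (3 * (lam + 1)) ->
  (lam + 1) * ((2 * A - 2 * SA) / (B + lam * A))
    + ((B - SB) + lam * (A - SA)) / (B + lam * A) <= eps.
Proof.
move=> He [TA1 TA2] [TB1 TB2]; have HD := mixture_norm_pos.
have Hl : 0 < lam by case: Hab.
set d := eps * (B + lam * A) / (3 * (lam + 1)) in TA2 TB2.
have Ed : 3 * (lam + 1) * d = eps * (B + lam * A) by rewrite /d; field; lra.
have Hnum : (lam + 1) * (2 * (A - SA)) + ((B - SB) + lam * (A - SA))
            <= eps * (B + lam * A) by nra.
have HDinv : 0 <= / (B + lam * A) by left; apply: Rinv_0_lt_compat.
have -> : (lam + 1) * ((2 * A - 2 * SA) / (B + lam * A))
            + ((B - SB) + lam * (A - SA)) / (B + lam * A)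
          = ((lam + 1) * (2 * (A - SA)) + ((B - SB) + lam * (A - SA)))
            * / (B + lam * A) by field; lra.
apply: Rle_trans (Rmult_le_compat_r _ _ _ HDinv Hnum) _.
by right; field; lra.
Qed.

Lemma size_law_l1 :
  Un_cv (fun n => sumr 0 n.+1 (fun k =>
           Rabs (size_law a b n k - mixture_law a b A B lam n k))) 0.
Proof.
have HAp := sp_A_pos; have HD := mixture_norm_pos.
have [Nc HNc] := conv_eventually_pos.
have [Nb HNb] : exists Nb, forall k, (Nb <= k)%N -> b k <= (lam + 1) * a k.
  by case: Hab => _ _ Hapos _ _ _ _ Hba _; exact: ratio_bound Hapos Hba.
have Hl : 0 < lam by case: Hab.
set dist := fun n k => Rabs (size_law a b n k - mixture_law a b A B lam n k).
apply: squeeze => eps He.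
set d := eps * (B + lam * A) / (3 * (lam + 1)).
have Hd : 0 < d by apply: Rdiv_lt_0_compat; nra.
have [M [HM [[TA1 TA2] [TB1 TB2]]]] := cut_point Nb d Hd.
set SA := sumr 0 M.+1 a in TA1 TA2; set SB := sumr 0 M.+1 b in TB1 TB2.
set mid := fun n => (sumr M.+1 (n - M) (fun k => a k * a (n - k)%N) / a n)
                    / (conv b a n / a n).
set rest := ((B - SB) + lam * (A - SA)) / (B + lam * A).
exists (fun _ => 0), (fun n => sumr 0 M.+1 (dist n) + sumr 0 M.+1 (fun j => dist n (n - j)%N)
                              + (lam + 1) * mid n + rest).
exists 0, (0 + 0 + (lam + 1) * ((2 * A - 2 * SA) / (B + lam * A)) + rest).
exists (maxn M.*2.+1 Nc); split; [|split; [exact: cv_const | split]].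
- move=> n Hn; have [P Cp] := HNc n ltac:(lia).
  split; first by apply: sumr_nonneg => k _; apply: Rabs_pos.
  rewrite (@sumr_three n M (dist n) ltac:(lia)).
  have Hmid : sumr M.+1 (n - M) (dist n) <= (lam + 1) * mid n + rest.
    exact: (size_law_middle M Nb n HNb HM ltac:(lia) P Cp).
  lra.
- apply: CV_plus; last exact: cv_const.
  apply: CV_plus; last by apply: cv_scal; apply: cv_div; [exact: middle_lim | exact: conv_lim | lra].
  apply: CV_plus; apply: cv_sumr0 => k _; apply: cv_abs0.
  + exact: size_law_head.
  + exact: size_law_tail.
- split; first lra.
  by rewrite !Rplus_0_l; apply: l1_budget.
Qed.

End LocalLimit.

Lemma big_sigT (I : finType) (T_ : I -> finType) (F : {i : I & T_ i} -> R) :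
  \big[Rplus/0]_(s : {i : I & T_ i}) F s =
  \big[Rplus/0]_(i : I) \big[Rplus/0]_(x : T_ i) F (Tagged T_ x).
Proof. by rewrite (sig_big_dep _ _ (fun i x => F (Tagged T_ x))); apply: eq_bigr => -[]. Qed.

Lemma big_option (T : finType) (F : option T -> R) :
  \big[Rplus/0]_(x : option T) F x = F None + \big[Rplus/0]_(t : T) F (Some t).
Proof.
have U : uniq (None :: map Some (index_enum T)).
  rewrite /= map_inj_uniq ?index_enum_uniq //; last by move=> ? ? [].
  by rewrite andbT; apply/mapP => -[].
have P : perm_eq (index_enum (option T)) (None :: map Some (index_enum T)).
  apply: uniq_perm => //; first exact: index_enum_uniq.
  move=> [x|]; rewrite mem_index_enum in_cons //=.
  by rewrite mem_map ?mem_index_enum // => ? ? [].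
by rewrite (perm_big _ P) big_cons big_map.
Qed.

Lemma big_const_R (T : finType) (A : {pred T}) c :
  \big[Rplus/0]_(i in A) c = INR #|A| * c.
Proof.
rewrite big_const; elim: #|A| => [|k IH]; first by rewrite /= Rmult_0_l.
by rewrite iterS IH S_INR; ring.
Qed.

Lemma sum_subsets n (H : nat -> R) :
  \big[Rplus/0]_(U : {set 'I_n}) H #|U| = sumr 0 n.+1 (fun k => INR 'C(n, k) * H k).
Proof.
have cardU (U : {set 'I_n}) : (#|U| < n.+1)%N by have := max_card U; rewrite card_ord.
rewrite (partition_big (fun U : {set 'I_n} => (inord #|U| : 'I_n.+1)) predT) //=.
rewrite /sumr big_mkord; apply: eq_bigr => j _.
rewrite (eq_big (fun U : {set 'I_n} => U \in [set U : {set 'I_n} | #|U| == j])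
                 (fun _ => H j)).
- by rewrite big_const_R card_draws card_ord.
- move=> U; rewrite inE; apply/eqP/eqP => [<-|E]; first by rewrite inordK.
  by apply: val_inj; rewrite /= inordK E.
- by move=> U /eqP <-; rewrite inordK.
Qed.

Lemma fact_pos k : 0 < INR k`!.
Proof. by apply: lt_0_INR; have := fact_gt0 k; lia. Qed.

Lemma totw_nonneg F k : 0 <= totw F k.
Proof.
rewrite /totw; elim/big_rec: _ => [|i x _ Hx]; first lra.
by have := wt_nonneg i; lra.
Qed.

Lemma coef_nonneg F k : 0 <= coef F k.
Proof.
apply: Rmult_le_pos; first exact: totw_nonneg.
by left; apply: Rinv_0_lt_compat; exact: fact_pos.
Qed.

Lemma totw_coef F k : totw F k = coef F k * INR k`!.
Proof. by rewrite /coef; have := fact_pos k => P; field; lra. Qed.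

Lemma prodwt_nonneg F G n (s : prodstr F G n) : 0 <= prodwt s.
Proof. by apply: Rmult_le_pos; exact: wt_nonneg. Qed.

(* Summing the weight of FG-structures against a function of the size k of
   the F-part: there are 'C(n,k) label sets, and n!/('C(n,k) k! (n-k)!) = 1. *)
Lemma sum_prodstr F G n (phi : nat -> R) :
  \big[Rplus/0]_(s : prodstr F G n) (prodwt s * phi #|tag s|) =
  sumr 0 n.+1 (fun k => INR n`! * (coef F k * coef G (n - k)) * phi k).
Proof.
rewrite /prodstr big_sigT.
transitivity (\big[Rplus/0]_(U : {set 'I_n})
                (totw F #|U| * totw G (n - #|U|) * phi #|U|)).
  apply: eq_bigr => U _.
  have -> : totw F #|U| * totw G (n - #|U|) * phi #|U| =
     \big[Rplus/0]_(i : 'I_(nstr F #|U|)) \big[Rplus/0]_(j : 'I_(nstr G (n - #|U|)))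
        (wt i * wt j * phi #|U|).
    rewrite /totw big_distrl /= big_distrl /=; apply: eq_bigr => i _.
    by rewrite big_distrr /= big_distrl /=; apply: eq_bigr => j _; ring.
  by rewrite pair_big /=; apply: eq_bigr => x _.
rewrite (sum_subsets n (fun k => totw F k * totw G (n - k) * phi k)).
apply: sumr_ext => k Hk.
have E : INR n`! = INR 'C(n, k) * (INR k`! * INR (n - k)`!).
  by rewrite -(bin_fact (n := n) (m := k)) ?mult_INR //; lia.
by rewrite E !totw_coef; ring.
Qed.

Lemma prod_totwE F G n : prod_totw F G n = INR n`! * conv (coef F) (coef G) n.
Proof.
have E := sum_prodstr F G n (fun _ => 1); rewrite /= in E.
rewrite /prod_totw (eq_bigr (fun s => prodwt s * 1)); last by move=> s _; ring.
by rewrite E /conv sumr_scal; apply: sumr_ext => k _; ring.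
Qed.

Lemma prod_coefE F G n : prod_coef F G n = conv (coef F) (coef G) n.
Proof. by rewrite /prod_coef prod_totwE; have := fact_pos n => P; field; lra. Qed.

Definition scaled (c : nat -> R) (rho : R) (k : nat) : R := c k * rho ^ k.

Lemma conv_scaled c d rho n :
  conv (scaled c rho) (scaled d rho) n = rho ^ n * conv c d n.
Proof.
rewrite /conv sumr_scal; apply: sumr_ext => k Hk.
have -> : rho ^ n = rho ^ k * rho ^ (n - k) by rewrite -pow_add; congr (_ ^ _); lia.
by rewrite /scaled; ring.
Qed.

Definition hat_factor (F G : wspecies) (rho lam : R) (n k : nat) : R :=
  coin_p F G rho lam *
    (if Rlt_dec 0 (coef G (n - k)) then
       rho ^ k / (INR k`! * series_val (coef F) rho) * / INR 'C(n, k) * / totw G (n - k)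
     else 0)
  + (1 - coin_p F G rho lam) *
    (if Rlt_dec 0 (coef F k) then
       rho ^ (n - k) / (INR (n - k)`! * series_val (coef G) rho) * / INR 'C(n, n - k)
       * / totw F k
     else 0).

Lemma law_hatS_someE F G rho lam n (s : prodstr F G n) :
  law_hatS_some rho lam s = prodwt s * hat_factor F G rho lam n #|tag s|.
Proof.
rewrite /law_hatS_some /heads_prob /tails_prob /prodwt /hat_factor.
by case: Rlt_dec => ?; case: Rlt_dec => ?; rewrite /Rdiv; cbn [is_left]; ring.
Qed.

Section Blocks.
Variables (F G : wspecies) (rho lam : R) (n : nat).
Hypotheses (rho_pos : 0 < rho) (lam_pos : 0 < lam).
Hypotheses (F_rho_pos : 0 < series_val (coef F) rho)
           (G_rho_pos : 0 < series_val (coef G) rho).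
Hypothesis prod_coef_pos : 0 < prod_coef F G n.

Let a := scaled (coef G) rho.
Let b := scaled (coef F) rho.
Let A := series_val (coef G) rho.
Let B := series_val (coef F) rho.

Lemma prod_totw_pos : 0 < prod_totw F G n.
Proof.
by rewrite prod_totwE -prod_coefE; apply: Rmult_lt_0_compat => //; exact: fact_pos.
Qed.

(* Mass of S_n on the structures whose F-part has size k. *)
Lemma block_mass_S k : (k <= n)%N ->
  INR n`! * (coef F k * coef G (n - k)) / prod_totw F G n = size_law a b n k.
Proof.
move=> Hk; have Hn := fact_pos n; have Hrn : 0 < rho ^ n by apply: pow_lt.
rewrite /size_law /a /b conv_scaled -prod_coefE /prod_coef /scaled.
have -> : rho ^ n = rho ^ k * rho ^ (n - k) by rewrite -pow_add; congr (_ ^ _); lia.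
have := pow_lt _ k rho_pos; have := pow_lt _ (n - k) rho_pos.
have := prod_totw_pos; move=> *; field; repeat split; lra.
Qed.

(* Mass of hat S_n on the structures whose F-part has size k: heads produce
   b_k / (B + lam A), tails produce lam a_(n-k) / (B + lam A). *)
Lemma block_mass_hatS k : (k <= n)%N -> 0 < coef F k -> 0 < coef G (n - k) ->
  INR n`! * (coef F k * coef G (n - k)) * hat_factor F G rho lam n k
  = mixture_law a b A B lam n k.
Proof.
move=> Hk Hf Hg; rewrite /hat_factor /mixture_law /coin_p /a /b /scaled -/A -/B.
case: (Rlt_dec 0 (coef G (n - k))) => [?|/(_ Hg) //].
case: (Rlt_dec 0 (coef F k)) => [?|/(_ Hf) //]; cbn [is_left].
rewrite !totw_coef bin_sub //.
have E : INR n`! = INR 'C(n, k) * (INR k`! * INR (n - k)`!).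
  by rewrite -(bin_fact Hk) !mult_INR.
have Ck : 0 < INR 'C(n, k) by apply: lt_0_INR; have := bin_gt0 n k; lia.
have Hk1 := fact_pos k; have Hk2 := fact_pos (n - k).
have HA : 0 < A by []; have HB : 0 < B by [].
have HD : 0 < B + lam * A by nra.
by rewrite E; field; repeat split; lra.
Qed.

Lemma block_term k : (k <= n)%N ->
  INR n`! * (coef F k * coef G (n - k))
    * Rabs (/ prod_totw F G n - hat_factor F G rho lam n k)
  <= Rabs (size_law a b n k - mixture_law a b A B lam n k).
Proof.
move=> Hk; have Hn := fact_pos n.
have [Hf|<-] := Rle_lt_or_eq_dec _ _ (coef_nonneg F k); last first.
  by rewrite Rmult_0_l Rmult_0_r Rmult_0_l; exact: Rabs_pos.
have [Hg|<-] := Rle_lt_or_eq_dec _ _ (coef_nonneg G (n - k)); last first.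
  by rewrite !Rmult_0_r Rmult_0_l; exact: Rabs_pos.
have Ht : 0 <= INR n`! * (coef F k * coef G (n - k)).
  by apply: Rmult_le_pos; [lra | apply: Rmult_le_pos; lra].
rewrite -block_mass_S // -block_mass_hatS // -{1}(Rabs_pos_eq _ Ht).
by rewrite -Rabs_mult; right; congr Rabs; rewrite /Rdiv; ring.
Qed.

Lemma dTV_le :
  dTV (@law_S F G n) (law_hatS rho lam (n:=n))
  <= sumr 0 n.+1 (fun k => Rabs (size_law a b n k - mixture_law a b A B lam n k)).
Proof.
set t := fun k => INR n`! * (coef F k * coef G (n - k)).
set Y := hat_factor F G rho lam n.
have Ht k : 0 <= t k.
  by apply: Rmult_le_pos; [have := fact_pos n; lra | apply: Rmult_le_pos; exact: coef_nonneg].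
have HT := prod_totw_pos.
have Ehat : \big[Rplus/0]_(s : prodstr F G n) law_hatS_some rho lam s
          = sumr 0 n.+1 (fun k => t k * Y k).
  by rewrite (eq_bigr _ (fun s _ => law_hatS_someE F G rho lam n s)); exact: sum_prodstr.
have Esome : \big[Rplus/0]_(s : prodstr F G n)
               Rabs (law_S (Some s) - law_hatS rho lam (Some s))
           = sumr 0 n.+1 (fun k => t k * Rabs (/ prod_totw F G n - Y k)).
  rewrite -(sum_prodstr F G n (fun k => Rabs (/ prod_totw F G n - Y k))).
  apply: eq_bigr => s _; rewrite /= law_hatS_someE /Rdiv -Rmult_minus_distr_l Rabs_mult.
  by rewrite (Rabs_pos_eq _ (prodwt_nonneg _ _ _ s)).
have Eone : 1 = sumr 0 n.+1 (fun k => t k * / prod_totw F G n).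
  rewrite (sumr_ext (fun k => / prod_totw F G n * t k)); last by move=> k _; ring.
  have St : sumr 0 n.+1 t = prod_totw F G n by rewrite prod_totwE /conv sumr_scal.
  by rewrite -sumr_scal St; field; lra.
have Enone : Rabs (0 - (1 - sumr 0 n.+1 (fun k => t k * Y k)))
             <= sumr 0 n.+1 (fun k => t k * Rabs (/ prod_totw F G n - Y k)).
  rewrite {1}Eone -sumr_minus Rminus_0_l Rabs_Ropp.
  apply: Rle_trans (sumr_abs _ _ _) _; apply: sumr_le => k _.
  by rewrite -Rmult_minus_distr_l Rabs_mult (Rabs_pos_eq _ (Ht k)); right.
have Eblocks : sumr 0 n.+1 (fun k => t k * Rabs (/ prod_totw F G n - Y k))
   <= sumr 0 n.+1 (fun k => Rabs (size_law a b n k - mixture_law a b A B lam n k)).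
  by apply: sumr_le => k Hk; apply: block_term; lia.
rewrite /dTV big_option /= Ehat Esome; lra.
Qed.

End Blocks.

Lemma dTV_nonneg (T : finType) (P Q : T -> R) : 0 <= dTV P Q.
Proof.
apply: Rmult_le_pos; first lra.
by elim/big_rec: _ => [|i x _ Hx]; [lra | have := Rabs_pos (P i - Q i); lra].
Qed.

Lemma infinite_sum_sumr s l : infinite_sum s l <-> Un_cv (fun n => sumr 0 n.+1 s) l.
Proof. by split=> H; apply: (Un_cv_ext _ _ _ _ H) => n; rewrite sumr_f_R0. Qed.

Lemma series_valP {c : nat -> R} {x l : R} : infinite_sum (fun n => c n * x ^ n) l -> series_val c x = l.
Proof.
move=> H; apply: (uniqueness_sum _ _ _ _ H); rewrite /series_val.
by apply: epsilon_spec; exists l.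
Qed.

Lemma dominated_series {x y : nat -> R} {Y c : R} {N : nat} :
  (forall n, 0 <= x n) -> (forall n, 0 <= y n) -> Un_cv (fun n => sumr 0 n.+1 y) Y ->
  0 <= c -> (forall k, (N <= k)%N -> x k <= c * y k) ->
  exists X, Un_cv (fun n => sumr 0 n.+1 x) X.
Proof.
move=> Hx Hy HY Hc Hdom.
have Hgrow : Un_growing (fun n => sumr 0 n.+1 x).
  by move=> n; rewrite (sumr_recr 0 n.+1) //; have := Hx n.+1; lra.
have Hub : has_ub (fun n => sumr 0 n.+1 x).
  exists (sumr 0 N x + c * Y) => _ [i ->]; set m := maxn N i.+1.
  have Hle : sumr 0 i.+1 x <= sumr 0 N x + sumr N m x.
    rewrite -sumr_split ?leq_maxl // (sumr_split 0 i.+1 m) ?leq_maxr //.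
    by have := @sumr_nonneg i.+1 m x (fun k _ => Hx k); lra.
  have Htail : sumr N m x <= c * Y.
    apply: Rle_trans (_ : c * sumr N m y <= c * Y).
      by rewrite sumr_scal; apply: sumr_le => k Hk; apply: Hdom; lia.
    apply: Rmult_le_compat_l => //; have := psum_mid Hy HY N m (leq_maxl _ _).
    by have := @sumr_nonneg 0 N y (fun k _ => Hy k); lra.
  lra.
have [X HX] := growing_cv _ Hgrow Hub; by exists X.
Qed.

Lemma scaled_nonneg (F : wspecies) {rho : R} :
  0 < rho -> forall k, 0 <= scaled (coef F) rho k.
Proof. by move=> Hr k; apply: Rmult_le_pos; [exact: coef_nonneg | apply/pow_le/Rlt_le]. Qed.

Section Scaling.
Context {c : nat -> R} {rho : R} {N : nat}.
Hypotheses (rho_pos : 0 < rho) (c_pos : forall n, (N <= n)%N -> 0 < c n).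

Lemma scaled_pos n : (N <= n)%N -> 0 < scaled c rho n.
Proof. by move=> Hn; apply: Rmult_lt_0_compat; [exact: c_pos | exact: pow_lt]. Qed.

Lemma scaled_ratio :
  Un_cv (fun n => c n / c n.+1) rho ->
  Un_cv (fun n => scaled c rho n / scaled c rho n.+1) 1.
Proof.
move=> Hratio; rewrite -(Rinv_r rho); last lra.
apply: (@cv_ev (fun n => c n / c n.+1 / rho) _ _ N); last by apply: cv_div; [|exact: cv_const|lra].
move=> n Hn; have := c_pos n Hn; have := c_pos n.+1 ltac:(lia).
have := pow_lt _ n rho_pos => P1 P2 P3.
by rewrite /scaled /=; field; repeat split; lra.
Qed.

Lemma scaled_conv {L : R} :
  Un_cv (fun n => sum_f_R0 (fun i => c i * c (n - i)%N) n / c n) L ->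
  Un_cv (fun n => conv (scaled c rho) (scaled c rho) n / scaled c rho n) L.
Proof.
move=> H; apply: (@cv_ev _ _ _ N _ H) => n Hn.
have := c_pos n Hn; have := pow_lt _ n rho_pos.
by rewrite conv_scaled sumr_f_R0 /scaled /conv => P1 P2; field; lra.
Qed.

Lemma scaled_quot {d : nat -> R} {lam : R} :
  Un_cv (fun n => d n / c n) lam ->
  Un_cv (fun n => scaled d rho n / scaled c rho n) lam.
Proof.
move=> H; apply: (@cv_ev _ _ _ N _ H) => n Hn.
have := c_pos n Hn; have := pow_lt _ n rho_pos.
by rewrite /scaled => P1 P2; field; lra.
Qed.

End Scaling.

Lemma scaled_subexp_pair {F G : wspecies} {rho lam : R} {NG : nat} {l : R} :
  (forall n, (NG <= n)%N -> 0 < coef G n) -> 0 < rho ->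
  Un_cv (fun n => coef G n / coef G n.+1) rho ->
  infinite_sum (fun n => coef G n * rho ^ n) l ->
  Un_cv (fun n => sum_f_R0 (fun i => coef G i * coef G (n - i)%N) n / coef G n)
        (2 * series_val (coef G) rho) ->
  0 < lam -> Un_cv (fun n => coef F n / coef G n) lam ->
  subexp_pair (scaled (coef G) rho) (scaled (coef F) rho)
              (series_val (coef G) rho) (series_val (coef F) rho) lam.
Proof.
move=> HNG Hr Hratio Hl Hconv Hlam Hquot.
have HA : Un_cv (fun n => sumr 0 n.+1 (scaled (coef G) rho)) (series_val (coef G) rho).
  by rewrite (series_valP Hl); apply/infinite_sum_sumr.
have Hba := scaled_quot Hr HNG Hquot.
have [Nb HNb] := ratio_bound (ex_intro _ NG (scaled_pos Hr HNG)) Hba.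
have Hc : 0 <= lam + 1 by lra.
have [lB HB] := dominated_series (scaled_nonneg F Hr) (scaled_nonneg G Hr) HA Hc HNb.
have -> : series_val (coef F) rho = lB by apply/series_valP/infinite_sum_sumr.
split => //; try exact: scaled_nonneg.
- by exists NG; exact: scaled_pos Hr HNG.
- exact: (scaled_ratio Hr HNG Hratio).
- exact: (scaled_conv Hr HNG Hconv).
Qed.

Section Conclusions.
Context {F G : wspecies} {rho lam : R} {NF NG : nat}.
Hypotheses (rho_pos : 0 < rho)
           (F_pos : forall n, (NF <= n)%N -> 0 < coef F n)
           (G_pos : forall n, (NG <= n)%N -> 0 < coef G n).
Hypothesis Hab : subexp_pair (scaled (coef G) rho) (scaled (coef F) rho)
                   (series_val (coef G) rho) (series_val (coef F) rho) lam.

Lemma F_rho_pos : 0 < series_val (coef F) rho.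
Proof.
case: Hab => _ Hb0 _ _ HB *.
exact: (series_pos Hb0 HB NF (scaled_pos rho_pos F_pos NF (leqnn NF))).
Qed.

Lemma prod_coef_eventually_pos n : (NF + NG <= n)%N -> 0 < prod_coef F G n.
Proof.
move=> Hn; rewrite prod_coefE /conv.
have Hnn j : 0 <= coef F j * coef G (n - j)%N by apply: Rmult_le_pos; exact: coef_nonneg.
apply: Rlt_le_trans (sumr_ge_term _ n NF Hnn ltac:(lia)).
by apply: Rmult_lt_0_compat; [apply: F_pos | apply: G_pos]; lia.
Qed.

(* First assertion: [z^n] F(z)G(z) ~ F(rho) g_n + G(rho) f_n, since
   rho^n [z^n] F(z)G(z) = (b*a)_n ~ (B + lam A) a_n and b_n ~ lam a_n. *)
Lemma prod_coef_asymptotics :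
  Un_cv (fun n => prod_coef F G n /
                  (series_val (coef F) rho * coef G n
                   + series_val (coef G) rho * coef F n)) 1.
Proof.
have HA := sp_A_pos Hab; have HB := sp_B_nonneg Hab; have Hl : 0 < lam by case: Hab.
have Hconv := conv_lim Hab.
have Hba : Un_cv (fun n => scaled (coef F) rho n / scaled (coef G) rho n) lam by case: Hab.
set a := scaled (coef G) rho in Hconv Hba *; set b := scaled (coef F) rho in Hconv Hba *.
set A := series_val (coef G) rho in HA Hconv *; set B := series_val (coef F) rho in HB Hconv *.
have -> : 1 = (B + lam * A) / (B + A * lam) by field; nra.
apply: (@cv_ev (fun n => (conv b a n / a n) / (B + A * (b n / a n))) _ _ (maxn NF NG)).
  move=> n Hn; have Pf := F_pos n ltac:(lia); have Pg := G_pos n ltac:(lia).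
  have Pr := pow_lt _ n rho_pos.
  have : 0 < A * (coef F n * rho ^ n / (coef G n * rho ^ n)).
    by apply: Rmult_lt_0_compat => //; apply: Rdiv_lt_0_compat; nra.
  rewrite /a /b conv_scaled -prod_coefE /scaled => P.
  by field; repeat split; nra.
apply: cv_div; [exact: Hconv | | nra].
by apply: CV_plus; [exact: cv_const | exact: cv_scal].
Qed.

Lemma dTV_lim : Un_cv (fun n => dTV (@law_S F G n) (law_hatS rho lam (n:=n))) 0.
Proof.
have HA := sp_A_pos Hab; have HB := F_rho_pos; have Hl : 0 < lam by case: Hab.
apply: squeeze => eps He.
exists (fun _ => 0), (fun n => sumr 0 n.+1 (fun k =>
  Rabs (size_law (scaled (coef G) rho) (scaled (coef F) rho) n k
        - mixture_law (scaled (coef G) rho) (scaled (coef F) rho)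
            (series_val (coef G) rho) (series_val (coef F) rho) lam n k))).
exists 0, 0, (NF + NG)%N; split; last first.
  by split; [exact: cv_const | split; [exact: (size_law_l1 Hab) | lra]].
move=> n Hn; split; first exact: dTV_nonneg.
by apply: dTV_le => //; exact: prod_coef_eventually_pos.
Qed.

End Conclusions.

Theorem proposition5 (F G : wspecies) (rho lambda : R) :
  (exists N : nat, forall n : nat, (N <= n)%nat -> 0 < coef F n) ->
  (exists N : nat, forall n : nat, (N <= n)%nat -> 0 < coef G n) ->
  0 < rho ->
  is_radius (coef G) rho ->
  Un_cv (fun n => coef G n / coef G (S n)) rho ->
  (exists l, infinite_sum (fun n => coef G n * rho ^ n) l) ->
  Un_cv (fun n => sum_f_R0 (fun i => coef G i * coef G (n - i)%nat) n / coef G n)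
        (2 * series_val (coef G) rho) ->
  0 < lambda ->
  Un_cv (fun n => coef F n / coef G n) lambda ->
  Un_cv (fun n => prod_coef F G n /
                  (series_val (coef F) rho * coef G n
                   + series_val (coef G) rho * coef F n)) 1
  /\ Un_cv (fun n => dTV (@law_S F G n) (law_hatS rho lambda (n:=n))) 0.
Proof.
move=> [NF HNF] [NG HNG] Hrho _ Hratio [l Hl] Hconv Hlam Hquot.
have Hab := scaled_subexp_pair HNG Hrho Hratio Hl Hconv Hlam Hquot.
split; first exact: (prod_coef_asymptotics Hrho HNF HNG Hab).
exact: (dTV_lim Hrho HNF HNG Hab).
Qed.
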